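(* Let $X$ be a Hausdorff $k_\omega$-space, let $Y$ be a Hausdorff topological space, and let $f:X\to Y$ be an injective continuous map. Then $f$ is regular.
   Context: A topological space $X$ is a $k_\omega$-space if there is a countable cover $\mathcal K$ of $X$ by compact subsets that determines the topology of $X$: a set $U\subset X$ is open in $X$ if and only if $U\cap K$ is open in $K$ for every $K\in\mathcal K$. A continuous map $h:X\to Y$ between topological spaces is called regular if for each point $x\in X$ and each neighborhood $U$ of $x$ in $X$ there is a closed subset $F\subset Y$ such that $h^{-1}(F)$ is a closed neighborhood of $x$ with $h^{-1}(F)\subset U$. *)

From HB Require Import structures.
From mathcomp Require Import all_boot all_order all_algebra.
From mathcomp Require Import all_classical all_reals all_analysis.
Set Implicit Arguments. Unset Strict Implicit. Unset Printing Implicit Defensive.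
Local Open Scope classical_set_scope.

Definition rel_open {X : topologicalType} (K U : set X) : Prop :=
  exists V : set X, open V /\ U `&` K = V `&` K.

Definition k_omega_space (X : topologicalType) : Prop :=
  exists KK : set (set X),
    countable KK /\
    (forall K, KK K -> compact K) /\
    \bigcup_(K in KK) K = setT /\
    (forall U : set X, open U <-> (forall K, KK K -> rel_open K (U `&` K))).

Definition regular_map {X Y : topologicalType} (h : X -> Y) : Prop :=
  continuous h /\
  forall (x : X) (U : set X), nbhs x U ->
    exists F : set Y, closed F /\ closed (h @^-1` F) /\ nbhs x (h @^-1` F) /\
      h @^-1` F `<=` U.

From mathcomp Require Import all_boot all_order all_algebra.
From mathcomp Require Import all_classical all_reals all_analysis.
Local Open Scope classical_set_scope.

(* Arrange the compact cover of X into an increasing sequence L_n that still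
   determines the topology.  Given x in an open U, build compacts
   {x} = C_0 ⊆ C_1 ⊆ ... ⊆ U and closed sets ∅ = Z_0 ⊆ Z_1 ⊆ ... of Y with
   f(C_n) ∩ Z_n = ∅, such that f(L_n \ U) lies in the interior of Z_(n+1) and
   some open P_n ⊇ f(C_n) has L_n ∩ f⁻¹(P_n) ⊆ C_(n+1).  Each step separates
   two compact images in the Hausdorff space Y, which are disjoint because f
   is injective.  Then F = Y \ ⋃_n int Z_n is closed, f⁻¹(F) ⊆ U, and f⁻¹(F)
   contains W = ⋃_n (L_n ∩ f⁻¹(P_n)) ∋ x, which is open because its trace on
   each L_m is the trace of the open set ⋃_n f⁻¹(P_(n+m)). *)

Lemma nat_dependent_choice {A : Type} {P : A -> Prop} {R : nat -> A -> A -> Prop}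
    {a0 : A} :
  P a0 -> (forall n a, P a -> exists2 b, P b & R n a b) ->
  exists s : nat -> A, s 0%N = a0 /\ forall n, P (s n) /\ R n (s n) (s n.+1).
Proof.
move=> Pa0 hR.
have /choice[next Rnext] : forall na : nat * {a | P a},
    exists b : {b | P b}, R na.1 (sval na.2) (sval b).
  by move=> [n [a Pa]]; have [b Pb Rab] := hR n a Pa; exists (exist P b Pb).
pose s : nat -> {a | P a} :=
  fix s n := if n is m.+1 then next (m, s m) else exist P a0 Pa0.
exists (fun n => sval (s n)); split=> // n; split; first exact: svalP.
exact: (Rnext (n, s n)).
Qed.

Lemma subset_nondecreasing {T : Type} (A : nat -> set T) :
  (forall n, A n `<=` A n.+1) -> {homo A : m n / (m <= n)%N >-> m `<=` n}.
Proof.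
move=> AS; apply: homo_leq AS => [B|B A0 C]; [exact: subset_refl|exact: subset_trans].
Qed.

Section compact_separation.
Context {T : topologicalType}.

Lemma compact_closure_separation (C K : set T) : compact K ->
    (forall y, K y -> exists2 B, nbhs y B & C `&` closure B = set0) ->
  exists W, [/\ open W, C `<=` W & K `&` closure W = set0].
Proof.
move=> cK sepK; apply: contrapT => noW.
(* Otherwise the traces on K of the closures of open W ⊇ C form a proper
   filter; a cluster point y in K cannot be separated from C. *)
pose G := filter_from [set W | open W /\ C `<=` W] (fun W => K `&` closure W).
have GF : ProperFilter G.
  apply: filter_from_proper; last first.
    by move=> W [oW CW]; apply/set0P/eqP => KW0; apply: noW; exists W.
  apply: filter_from_filter; first by exists setT; split; [exact: openT|].
  move=> W1 W2 [oW1 CW1] [oW2 CW2]; exists (W1 `&` W2).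
    by split; [exact: openI | move=> z Cz; split; [exact: CW1|exact: CW2]].
  move=> z [Kz clWz]; have [clW1z clW2z] := closureI clWz.
  by split; split.
have GK : G K by exists setT; [split; [exact: openT|] | exact: subIsetl].
have [y [Ky Gy]] := cK G GF GK.
have [B By /disjoints_subset CB] := sepK y Ky.
have GnB : G (K `&` closure (~` closure B)).
  exists (~` closure B) => //; split=> //.
  exact/closed_openC/closed_closure.
have [z [[_ clnBz] Bz]] := Gy _ _ GnB (nbhs_interior By).
have [w [nclBw Bw]] := clnBz B° (open_nbhs_nbhs (conj (@open_interior _ B) Bz)).
by apply/nclBw/subset_closure; exact: interior_subset.
Qed.

Lemma hausdorff_closure_separation_point (x y : T) : hausdorff_space T ->
  x <> y -> exists2 B, nbhs y B & [set x] `&` closure B = set0.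
Proof.
rewrite open_hausdorff => /(_ x y) + /eqP xy => /(_ xy)[[A B] /=].
rewrite !inE => -[Ax By] [oA oB AB0]; exists B; first exact: open_nbhs_nbhs.
apply/disjoints_subset => _ /= -> /(_ A (open_nbhs_nbhs (conj oA Ax)))[w [Bw Aw]].
by move/disjoints_subset: AB0 => /(_ w Aw).
Qed.

Lemma hausdorff_compact_separation {K1 K2 : set T} : hausdorff_space T ->
    compact K1 -> compact K2 -> K1 `&` K2 = set0 ->
  exists W, [/\ open W, K2 `<=` W & K1 `&` closure W = set0].
Proof.
move=> hT cK1 cK2 K12; apply: compact_closure_separation => // y K1y.
have [W [oW yW K2W]] : exists W, [/\ open W, [set y] `<=` W & K2 `&` closure W = set0].
  apply: compact_closure_separation => // z K2z.
  apply: hausdorff_closure_separation_point => // yz.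
  by move/disjoints_subset: K12 => /(_ y K1y); rewrite yz.
by exists W => //; apply: open_nbhs_nbhs; split => //; exact: yW.
Qed.

End compact_separation.

Section k_omega.
Context {X : topologicalType}.

Definition determines_topology (L : nat -> set X) :=
  forall U, (forall n, rel_open (L n) (U `&` L n)) -> open U.

Lemma rel_open_subset (K L U : set X) :
  K `<=` L -> rel_open L (U `&` L) -> rel_open K (U `&` K).
Proof.
move=> KL [V [oV]]; rewrite -setIA setIid => UV; exists V; split=> //.
by rewrite -setIA setIid -(setIidr KL) !setIA UV.
Qed.

Lemma k_omega_nondecreasing_cover : k_omega_space X ->
  exists L : nat -> set X, [/\ forall n, compact (L n),
    {homo L : m n / (m <= n)%N >-> m `<=` n},
    forall x, exists n, L n x & determines_topology L].
Proof.
move=> [KK [/pcard_surjP[e KKe] [cKK [coverKK kKK]]]].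
pose k n := if `[< KK (e n) >] then e n else set0.
have ck n : compact (k n).
  by rewrite /k; case: asboolP => [/cKK //|_]; exact: compact0.
pose L n := \big[setU/set0]_(i < n.+1) k i.
have kL n : k n `<=` L n by rewrite /L big_ord_recr /= => z; right.
have KKk K : KK K -> exists n, K = k n.
  by move=> KK_K; have [n _ enK] := KKe K KK_K; exists n; rewrite /k enK asboolT.
exists L; split.
- by move=> n; apply: bigsetU_compact => i _.
- by move=> m n mn; apply: subset_bigsetU.
- move=> x; have [K /KKk[n ->] knx] : (\bigcup_(K in KK) K) x by rewrite coverKK.
  by exists n; exact: kL.
- move=> U relU; apply/kKK => K /KKk[n ->].
  exact: rel_open_subset (kL n) (relU n).
Qed.

Lemma determines_topology_open_bigcup (L C V : nat -> set X) :
    determines_topology L ->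
    {homo L : m n / (m <= n)%N >-> m `<=` n} ->
    {homo C : m n / (m <= n)%N >-> m `<=` n} ->
    (forall n, open (V n)) -> (forall n, C n `<=` V n) ->
    (forall n, L n `&` V n `<=` C n.+1) ->
  open (\bigcup_n (L n `&` V n)).
Proof.
move=> detL Lmono Cmono oV CV LVC; apply: detL => m.
exists (\bigcup_n V (n + m)%N); split; first by apply: bigcup_open => n _.
apply/seteqP; split=> [z [[[n _ [Lnz Vnz]] Lmz] _]|z [[n _ Vz] Lmz]].
- split=> //; case: (leqP m n) => [mn|nm].
    by exists (n - m)%N => //; rewrite subnK.
  by exists 0%N => //; apply/CV/(Cmono n.+1) => //; exact: LVC.
- split=> //; split=> //; exists (n + m)%N => //; split=> //.
  by apply: (Lmono m) => //; exact: leq_addl.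
Qed.

End k_omega.

Section injective_regular.
Context {X Y : topologicalType} (f : X -> Y).
Hypotheses (hY : hausdorff_space Y) (f_inj : injective f) (f_cont : continuous f).

Lemma injective_compact_separation {A B : set X} :
    compact A -> compact B -> A `&` B = set0 ->
  exists W, [/\ open W, B `<=` f @^-1` W & A `&` f @^-1` closure W = set0].
Proof.
have cimg D : compact D -> compact (f @` D).
  by apply: continuous_compact; exact: continuous_subspaceT.
move=> cA cB /disjoints_subset AB0; have fAB0 : f @` A `&` f @` B = set0.
  apply/disjoints_subset => _ [a Aa <-] [b Bb /f_inj eba].
  by apply: (AB0 a) => //; rewrite -eba.
have [W [oW fBW /disjoints_subset fAW]] :=
  hausdorff_compact_separation hY (cimg _ cA) (cimg _ cB) fAB0.
exists W; split=> [//|b Bb|]; first by apply: fBW; exists b.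
by apply/disjoints_subset => a Aa; apply: fAW; exists a.
Qed.

Variable U : set X.
Hypothesis oU : open U.

Definition admissible (CZ : set X * set Y) : Prop :=
  [/\ compact CZ.1, CZ.1 `<=` U, closed CZ.2 & CZ.1 `&` f @^-1` CZ.2 = set0].

Definition extends (L : set X) (CZ CZ' : set X * set Y) : Prop :=
  [/\ CZ.1 `<=` CZ'.1, CZ.2 `<=` CZ'.2,
    exists2 P, open P & CZ.1 `<=` f @^-1` P /\ L `&` f @^-1` P `<=` CZ'.1
    & L `&` ~` U `<=` f @^-1` CZ'.2°].

Lemma admissible_extends (L : set X) (CZ : set X * set Y) :
  compact L -> admissible CZ -> exists2 CZ', admissible CZ' & extends L CZ CZ'.
Proof.
case: CZ => C Z cL [/= cC CU cZ /disjoints_subset CZ0].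
have cLU : compact (L `&` ~` U) by apply: compact_closedI => //; exact: open_closedC.
pose B := (L `&` f @^-1` Z) `|` (L `&` ~` U).
have cB : compact B.
  apply: compactU => //; apply: compact_closedI => //.
  exact: preimage_closed (fun x _ => f_cont x) cZ.
have CB0 : C `&` B = set0.
  apply/disjoints_subset => z Cz [[_ Zfz]|[_ nUz]]; last exact/nUz/CU.
  exact: CZ0 Cz Zfz.
have [W [oW BW /disjoints_subset CW0]] := injective_compact_separation cC cB CB0.
pose C' := C `|` (L `&` f @^-1` ~` W).
have C'U : C' `<=` U.
  move=> z [/CU //|[Lz nWfz]]; apply: contrapT => nUz.
  by apply/nWfz/BW; right.
have cC' : compact C'.
  apply: compactU => //; apply: compact_closedI => //.
  exact: preimage_closed (fun x _ => f_cont x) (open_closedC oW).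
have C'LU0 : C' `&` (L `&` ~` U) = set0.
  by apply/disjoints_subset => z /C'U Uz [_ nUz].
have [V [oV LUV /disjoints_subset C'V0]] :=
  injective_compact_separation cC' cLU C'LU0.
exists (C', Z `|` closure V); split=> //=.
- exact/closedU/closed_closure.
- apply/disjoints_subset => z C'z [Zfz|clVfz]; last exact: C'V0 C'z clVfz.
  case: C'z => [Cz|[Lz nWfz]]; first exact: CZ0 Cz Zfz.
  by apply/nWfz/BW; left.
- by move=> z; left.
- exists (~` closure W); first exact/closed_openC/closed_closure.
  split=> [z /CW0 //|z [Lz nclWfz]]; right; split=> // Wfz.
  exact/nclWfz/subset_closure.
- suff VZ : V `<=` (Z `|` closure V)° by move=> z /LUV /VZ.
  by rewrite -open_subsetE // => y Vy; right; exact: subset_closure.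
Qed.

Lemma injective_regular_nbhs (L : nat -> set X) (x : X) :
    (forall n, compact (L n)) -> {homo L : m n / (m <= n)%N >-> m `<=` n} ->
    (forall z, exists n, L n z) -> determines_topology L -> U x ->
  exists F, [/\ closed F, nbhs x (f @^-1` F) & f @^-1` F `<=` U].
Proof.
move=> cL Lmono Lcover detL Ux.
have adm0 : admissible ([set x], set0).
  split=> /=; [exact: compact_set1|by move=> _ ->|exact: closed0|].
  by rewrite preimage_set0 setI0.
have [s [s0 /all_and2[adm ext]]] :=
  nat_dependent_choice adm0 (fun n a => admissible_extends (L n) a (cL n)).
pose C n := (s n).1; pose Z n := (s n).2.
have /choice[P /all_and3[oP CP LPC]] : forall n, exists P : set Y,
    [/\ open P, C n `<=` f @^-1` P & L n `&` f @^-1` P `<=` C n.+1].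
  by move=> n; have [_ _ [P oP [CP LPC]] _] := ext n; exists P.
have Cmono : {homo C : m n / (m <= n)%N >-> m `<=` n}.
  by apply: subset_nondecreasing => n; have [] := ext n.
have Zmono : {homo Z : m n / (m <= n)%N >-> m `<=` n}.
  by apply: subset_nondecreasing => n; have [] := ext n.
have CZ0 m n z : C m z -> ~ Z n (f z).
  have [_ _ _ /disjoints_subset CZ0] := adm (maxn m n).
  move=> /(Cmono _ _ (leq_maxl m n)) Cz /(Zmono _ _ (leq_maxr m n)).
  exact: CZ0 Cz.
exists (~` \bigcup_n (Z n)°); split.
- by apply/open_closedC/bigcup_open => n _; exact: open_interior.
- rewrite nbhsE; exists (\bigcup_n (L n `&` f @^-1` P n)); first split.
  + apply: determines_topology_open_bigcup Cmono _ _ LPC => // n.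
    exact: open_comp (fun z _ => f_cont z) (oP n).
  + have [n Lnx] := Lcover x; exists n => //; split=> //.
    by apply/CP/(Cmono 0%N) => //; rewrite /C s0.
  + move=> z [n _ /LPC Cz] [m _ /interior_subset Zfz].
    exact: CZ0 Cz Zfz.
- move=> z nZz; apply: contrapT => nUz; have [n Lnz] := Lcover z.
  by apply: nZz; exists n.+1 => //; have [_ _ _ LUZ] := ext n; exact: LUZ.
Qed.

End injective_regular.

Theorem proposition1 (X Y : topologicalType) (f : X -> Y) :
  hausdorff_space X -> k_omega_space X -> hausdorff_space Y ->
  injective f -> continuous f -> regular_map f.
Proof.
move=> _ /k_omega_nondecreasing_cover[L [cL Lmono Lcover detL]] hY f_inj f_cont.
split=> // x U0; rewrite {1}nbhsE => -[U [oU Ux] UU0].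
have [F [cF nbhsF FU]] :=
  injective_regular_nbhs f hY f_inj f_cont _ oU _ _ cL Lmono Lcover detL Ux.
exists F; split=> //; split; first exact: preimage_closed (fun z _ => f_cont z) cF.
by split=> //; exact: subset_trans FU UU0.
Qed.
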